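(* The automorphic growth of Thompson's group $V$ is exponential.
   Context: Let $\mathfrak{C}=\{0,1\}^\omega$ be the Cantor space with the product topology. For $w_1,w_2\in\{0,1\}^*$, a homeomorphism maps $w_1\mathfrak{C}$ rigidly to $w_2\mathfrak{C}$ if it restricts to $w_1y\mapsto w_2y$. Thompson's group $V$ is the group of homeomorphisms $v$ of $\mathfrak{C}$ such that every $x\in\mathfrak{C}$ lies in a cone $w\mathfrak{C}$ that $v$ maps rigidly onto some cone; $V$ is finitely generated. For a finitely generated group $G$ with finite generating set $\Sigma$, the automorphic growth function sends $n$ to the number of $\operatorname{Aut}(G)$-orbits of $G$ containing an element of word length at most $n$. Exponential means it is $\sim$-equivalent to $n\mapsto 2^n$, where $f\sim g$ iff $f\preccurlyeq g$ and $g\preccurlyeq f$, and $f\preccurlyeq g$ means there is $\lambda\in\mathbb{N}\setminus\{0\}$ with $f(n)\le\lambda g(\lambda n+\lambda)+\lambda$ for all $n$. *)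

From Stdlib Require Import Arith List Lia ClassicalEpsilon.
Import ListNotations.

Definition Cantor := nat -> bool.

Definition in_cone (w : list bool) (x : Cantor) : Prop :=
  forall i, i < length w -> x i = nth i w false.

Definition cat_word (w : list bool) (y : Cantor) : Cantor :=
  fun i => if i <? length w then nth i w false else y (i - length w).

Definition maps_rigidly (f : Cantor -> Cantor) (w1 w2 : list bool) : Prop :=
  forall y, f (cat_word w1 y) = cat_word w2 y.

(* continuity for the product topology (bool discrete) *)
Definition continuous_C (f : Cantor -> Cantor) : Prop :=
  forall x n, exists m, forall y, (forall i, i < m -> y i = x i) ->
    forall i, i < n -> f y i = f x i.

Definition homeomorphism_C (f : Cantor -> Cantor) : Prop :=
  exists g : Cantor -> Cantor,
    (forall x, g (f x) = x) /\ (forall x, f (g x) = x) /\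
    continuous_C f /\ continuous_C g.

Definition inV (v : Cantor -> Cantor) : Prop :=
  homeomorphism_C v /\
  forall x, exists w1 w2, in_cone w1 x /\ maps_rigidly v w1 w2.

Definition compose (a b : Cantor -> Cantor) : Cantor -> Cantor := fun x => a (b x).
Definition idC : Cantor -> Cantor := fun x => x.

Definition is_autV (phi : (Cantor -> Cantor) -> (Cantor -> Cantor)) : Prop :=
  (forall a, inV a -> inV (phi a)) /\
  (forall a b, inV a -> inV b -> phi a = phi b -> a = b) /\
  (forall b, inV b -> exists a, inV a /\ phi a = b) /\
  (forall a b, inV a -> inV b -> phi (compose a b) = compose (phi a) (phi b)).

Definition aut_equiv (a b : Cantor -> Cantor) : Prop :=
  exists phi, is_autV phi /\ phi a = b.

(* words over Sigma ∪ Sigma^{-1}: letter (i, true) = Sigma_i, (i, false) = Sigma_i^{-1} *)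
Inductive evals (Sigma : list (Cantor -> Cantor)) :
  list (nat * bool) -> (Cantor -> Cantor) -> Prop :=
| evals_nil : evals Sigma [] idC
| evals_pos : forall i w v, i < length Sigma -> evals Sigma w v ->
    evals Sigma ((i, true) :: w) (compose (nth i Sigma idC) v)
| evals_neg : forall i w v t, i < length Sigma -> evals Sigma w v ->
    compose t (nth i Sigma idC) = idC -> compose (nth i Sigma idC) t = idC ->
    evals Sigma ((i, false) :: w) (compose t v).

Definition generatesV (Sigma : list (Cantor -> Cantor)) : Prop :=
  (forall s, In s Sigma -> inV s) /\
  (forall v, inV v -> exists w, evals Sigma w v).

Definition in_ball (Sigma : list (Cantor -> Cantor)) (n : nat) (v : Cantor -> Cantor) : Prop :=
  exists w, length w <= n /\ evals Sigma w v.

(* k is the number of Aut(V)-orbits containing an element of the n-ball: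
   L is a list of representatives, one for each such orbit *)
Definition orbit_count (Sigma : list (Cantor -> Cantor)) (n k : nat) : Prop :=
  exists L : list (Cantor -> Cantor),
    length L = k /\
    (forall a, In a L -> in_ball Sigma n a) /\
    (forall i j, i < length L -> j < length L -> i <> j ->
       ~ aut_equiv (nth i L idC) (nth j L idC)) /\
    (forall v, in_ball Sigma n v -> exists a, In a L /\ aut_equiv v a).

(* automorphic growth function (well defined: such k exists and is unique) *)
Definition aut_growth (Sigma : list (Cantor -> Cantor)) (n : nat) : nat :=
  epsilon (inhabits 0) (orbit_count Sigma n).

Definition growth_le (f g : nat -> nat) : Prop :=
  exists lam, lam <> 0 /\ forall n, f n <= lam * g (lam * n + lam) + lam.

Definition growth_equiv (f g : nat -> nat) : Prop := growth_le f g /\ growth_le g f.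

Definition exponential (f : nat -> nat) : Prop := growth_equiv f (fun n => 2 ^ n).

(* Upper bound: at most (2|Sigma| + 1)^n words have length at most n, so at most that
   many Aut(V)-orbits meet the n-ball.

   Lower bound: the order of an element is invariant under automorphisms, so it is enough
   to find, for every d <= 2^n, an element of order d and word length O(n).  An element
   that permutes d cones c, c_1, ..., c_(d-1) rigidly and cyclically and fixes every other
   point has order d.  Composing it with the element swapping the two halves of c gives
   such a cycle of 2d cones; composing it with an element swapping c with a cone outside
   the cycle gives a cycle of d + 1 cones.  Conjugating by a fixed element of V then puts
   the cycle back into a standard position (first cone 00, all cones inside 0), so
   following the binary expansion of d every digit costs a bounded number of generators. *)

From Stdlib Require Import Arith List Lia ClassicalEpsilon FunctionalExtensionality Classical.
Import ListNotations.

(** * Cones and rigid maps *)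

Definition shift (k : nat) (x : Cantor) : Cantor := fun i => x (k + i).

Lemma cat_word_in_cone w y : in_cone w (cat_word w y).
Proof.
  intros i Hi. unfold cat_word. apply Nat.ltb_lt in Hi. now rewrite Hi.
Qed.

Lemma cat_word_shift w x : in_cone w x -> cat_word w (shift (length w) x) = x.
Proof.
  intros Hx. apply functional_extensionality. intro i. unfold cat_word, shift.
  destruct (i <? length w) eqn:E.
  - apply Nat.ltb_lt in E. symmetry. now apply Hx.
  - apply Nat.ltb_ge in E. f_equal. lia.
Qed.

Lemma shift_cat_word w y : shift (length w) (cat_word w y) = y.
Proof.
  apply functional_extensionality. intro i. unfold cat_word, shift.
  destruct (length w + i <? length w) eqn:E.
  - apply Nat.ltb_lt in E. lia.
  - f_equal. lia.
Qed.

Lemma cat_word_app u v y : cat_word (u ++ v) y = cat_word u (cat_word v y).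
Proof.
  apply functional_extensionality. intro i. unfold cat_word. rewrite length_app.
  destruct (Nat.lt_ge_cases i (length u)) as [Hu | Hu].
  - rewrite (proj2 (Nat.ltb_lt i (length u))), (proj2 (Nat.ltb_lt i _)) by lia.
    now apply app_nth1.
  - rewrite (proj2 (Nat.ltb_ge i (length u))) by lia. rewrite app_nth2 by lia.
    destruct (i - length u <? length v) eqn:E.
    + apply Nat.ltb_lt in E. now rewrite (proj2 (Nat.ltb_lt i _)) by lia.
    + apply Nat.ltb_ge in E. rewrite (proj2 (Nat.ltb_ge i _)) by lia. f_equal. lia.
Qed.

Lemma shift_cat_word_le k w y :
  k <= length w -> shift k (cat_word w y) = cat_word (skipn k w) y.
Proof.
  intros Hk. rewrite <- (firstn_skipn k w), cat_word_app at 1.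
  rewrite <- (firstn_length_le w Hk) at 1. apply shift_cat_word.
Qed.

Lemma in_cone_app u v x :
  in_cone (u ++ v) x <-> in_cone u x /\ in_cone v (shift (length u) x).
Proof.
  split.
  - intros H. split.
    + intros i Hi. rewrite H by (rewrite length_app; lia). now apply app_nth1.
    + intros i Hi. unfold shift. rewrite H by (rewrite length_app; lia).
      rewrite app_nth2 by lia. f_equal. lia.
  - intros [Hu Hv] i Hi. rewrite length_app in Hi.
    destruct (Nat.lt_ge_cases i (length u)).
    + rewrite app_nth1 by assumption. now apply Hu.
    + rewrite app_nth2 by assumption. rewrite <- Hv by lia. unfold shift. f_equal. lia.
Qed.

Lemma in_cone_nested u v x :
  in_cone u x -> in_cone v x -> length u <= length v -> exists r, v = u ++ r.
Proof.
  intros Hu Hv Hl. exists (skipn (length u) v).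
  apply nth_ext with (d := false) (d' := false).
  - rewrite length_app, length_skipn. lia.
  - intros i Hi. destruct (Nat.lt_ge_cases i (length u)).
    + rewrite app_nth1 by assumption. rewrite <- Hu, <- Hv by lia. reflexivity.
    + rewrite app_nth2, nth_skipn by assumption. f_equal. lia.
Qed.

Lemma in_cone_snoc c x : in_cone c x -> in_cone (c ++ [x (length c)]) x.
Proof.
  intros Hc. apply in_cone_app. split; [assumption |].
  intros [|i] Hi; [| simpl in Hi; lia]. unfold shift. now rewrite Nat.add_0_r.
Qed.

Lemma in_cone_head b w x : in_cone (b :: w) x -> x 0 = b.
Proof. intros H. apply H. simpl. lia. Qed.

Lemma in_cone_two a b x : x 0 = a -> x 1 = b -> in_cone [a; b] x.
Proof. intros H0 H1 [| [| i]] Hi; simpl in Hi |- *; auto; lia. Qed.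

Lemma maps_rigidly_app f u v w : maps_rigidly f u v -> maps_rigidly f (u ++ w) (v ++ w).
Proof. intros H y. rewrite !cat_word_app. apply H. Qed.

Lemma maps_rigidly_in_cone f u v x : maps_rigidly f u v -> in_cone u x -> in_cone v (f x).
Proof.
  intros H Hx. rewrite <- (cat_word_shift u x Hx), H. apply cat_word_in_cone.
Qed.

Lemma maps_rigidly_compose f g u v w :
  maps_rigidly g u v -> maps_rigidly f v w -> maps_rigidly (compose f g) u w.
Proof. intros Hg Hf y. unfold compose. now rewrite Hg, Hf. Qed.

Lemma maps_rigidly_inverse f g u v :
  (forall x, g (f x) = x) -> maps_rigidly f u v -> maps_rigidly g v u.
Proof. intros K H y. now rewrite <- H, K. Qed.

Lemma maps_rigidly_fixed f u : (forall x, in_cone u x -> f x = x) -> maps_rigidly f u u.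
Proof. intros H y. apply H, cat_word_in_cone. Qed.

Definition disjoint_cones (u v : list bool) : Prop :=
  forall x, in_cone u x -> in_cone v x -> False.

Lemma disjoint_cones_app u v u' v' :
  disjoint_cones u v -> disjoint_cones (u ++ u') (v ++ v').
Proof. intros H x Hu Hv. apply in_cone_app in Hu, Hv. now apply (H x). Qed.

Lemma disjoint_cones_branch c : disjoint_cones (c ++ [false]) (c ++ [true]).
Proof.
  intros x H0 H1. apply in_cone_app, proj2, in_cone_head in H0.
  apply in_cone_app, proj2, in_cone_head in H1. congruence.
Qed.

Lemma disjoint_cones_head u v : disjoint_cones (false :: u) (true :: v).
Proof. intros x H0 H1. apply in_cone_head in H0, H1. congruence. Qed.

(** * Thompson's group V *)

Definition locally_rigid (f : Cantor -> Cantor) : Prop :=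
  forall x, exists w1 w2, in_cone w1 x /\ maps_rigidly f w1 w2.

Lemma locally_rigid_continuous f : locally_rigid f -> continuous_C f.
Proof.
  intros H x n. destruct (H x) as [w1 [w2 [Hx Hw]]]. exists (length w1 + n).
  intros y Hy. assert (Hyc : in_cone w1 y).
  { intros i Hi. rewrite Hy by lia. now apply Hx. }
  rewrite <- (cat_word_shift w1 x Hx), <- (cat_word_shift w1 y Hyc), !Hw.
  intros i Hi. unfold cat_word, shift.
  destruct (i <? length w2) eqn:E; [reflexivity |].
  apply Nat.ltb_ge in E. apply Hy. lia.
Qed.

Lemma locally_rigid_inverse f g :
  (forall x, g (f x) = x) -> (forall x, f (g x) = x) ->
  locally_rigid f -> locally_rigid g.
Proof.
  intros Kf Kg H y. destruct (H (g y)) as [w1 [w2 [Hx Hw]]].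
  exists w2, w1. split.
  - rewrite <- (Kg y). now apply (maps_rigidly_in_cone f w1 w2).
  - now apply (maps_rigidly_inverse f).
Qed.

Lemma locally_rigid_compose f g :
  locally_rigid f -> locally_rigid g -> locally_rigid (compose f g).
Proof.
  intros Hf Hg x. destruct (Hg x) as [w1 [w2 [Hx Hw]]].
  destruct (Hf (g x)) as [u1 [u2 [Hgx Hu]]].
  pose proof (maps_rigidly_in_cone g w1 w2 x Hw Hx) as Hgx'.
  destruct (Nat.le_ge_cases (length u1) (length w2)) as [L | L].
  - destruct (in_cone_nested u1 w2 (g x) Hgx Hgx' L) as [r ->].
    exists w1, (u2 ++ r). split; [assumption |].
    exact (maps_rigidly_compose f g _ _ _ Hw (maps_rigidly_app f u1 u2 r Hu)).
  - destruct (in_cone_nested w2 u1 (g x) Hgx' Hgx L) as [r ->].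
    exists (w1 ++ r), u2. split.
    + apply in_cone_app. split; [assumption |].
      rewrite <- (cat_word_shift w1 x Hx), Hw in Hgx.
      apply in_cone_app in Hgx. now rewrite shift_cat_word in Hgx.
    + exact (maps_rigidly_compose f g _ _ _ (maps_rigidly_app g w1 w2 r Hw) Hu).
Qed.

Definition prefix (k : nat) (x : Cantor) : list bool := map x (seq 0 k).

Lemma in_cone_prefix k x : in_cone (prefix k x) x.
Proof.
  intros i Hi. unfold prefix in *. rewrite length_map, length_seq in Hi.
  rewrite (nth_indep _ false (x 0)) by (rewrite length_map, length_seq; lia).
  now rewrite map_nth, seq_nth.
Qed.

Lemma locally_rigid_of_depth f k :
  (forall u, length u = k -> exists v, maps_rigidly f u v) -> locally_rigid f.
Proof.
  intros H x. destruct (H (prefix k x)) as [v Hv].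
  - unfold prefix. now rewrite length_map, length_seq.
  - exists (prefix k x), v. split; [apply in_cone_prefix | assumption].
Qed.

Lemma inverse_of_depth (f g : Cantor -> Cantor) k :
  (forall u y, length u = k -> g (f (cat_word u y)) = cat_word u y) -> forall x, g (f x) = x.
Proof.
  intros H x. rewrite <- (cat_word_shift (prefix k x) x (in_cone_prefix k x)).
  apply H. unfold prefix. now rewrite length_map, length_seq.
Qed.

Lemma inV_intro f g :
  (forall x, g (f x) = x) -> (forall x, f (g x) = x) -> locally_rigid f -> inV f.
Proof.
  intros Kf Kg H. split; [| exact H].
  exists g. repeat split; auto using locally_rigid_continuous.
  apply locally_rigid_continuous, (locally_rigid_inverse f g); assumption.
Qed.

Lemma inV_inverse f g :
  inV f -> (forall x, g (f x) = x) -> (forall x, f (g x) = x) -> inV g.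
Proof.
  intros [_ H] Kf Kg. apply (inV_intro g f Kg Kf).
  now apply (locally_rigid_inverse f g).
Qed.

Lemma inV_id : inV idC.
Proof.
  apply (inV_intro idC idC); try reflexivity.
  intro x. exists [], []. split; [intros i Hi; simpl in Hi; lia | intro y; reflexivity].
Qed.

Lemma inV_compose f g : inV f -> inV g -> inV (compose f g).
Proof.
  intros [[f' [Kf [Kf' _]]] Hf] [[g' [Kg [Kg' _]]] Hg].
  apply (inV_intro _ (compose g' f')); unfold compose.
  - intro x. now rewrite Kf, Kg.
  - intro x. now rewrite Kg', Kf'.
  - now apply locally_rigid_compose.
Qed.

Lemma inV_injective f x y : inV f -> f x = f y -> x = y.
Proof. intros [[g [K _]] _] E. now rewrite <- (K x), E, K. Qed.

(** * Words over the generators *)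

Section Words.

Variable Sigma : list (Cantor -> Cantor).

Lemma evals_inV w v : (forall s, In s Sigma -> inV s) -> evals Sigma w v -> inV v.
Proof.
  intros HS H. induction H as [| i w v Hi _ IH | i w v t Hi _ IH Kt Ks].
  - apply inV_id.
  - apply inV_compose; [apply HS, nth_In |]; assumption.
  - apply inV_compose; [| assumption].
    apply (inV_inverse (nth i Sigma idC)); [apply HS, nth_In; assumption | |];
      intro x; [exact (equal_f Kt x) | exact (equal_f Ks x)].
Qed.

Lemma evals_functional w v1 v2 : evals Sigma w v1 -> evals Sigma w v2 -> v1 = v2.
Proof.
  intros H. revert v2.
  induction H as [| i w v Hi _ IH | i w v t Hi _ IH Kt Ks]; intros v2 H2;
    inversion H2 as [| ? ? v' ? Hw' | ? ? v' t' ? Hw' Kt' Ks']; subst.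
  - reflexivity.
  - now rewrite (IH v' Hw').
  - rewrite (IH v' Hw'). f_equal. apply functional_extensionality. intro x.
    pose proof (equal_f Kt' (t x)) as E. pose proof (equal_f Ks x) as E'.
    unfold compose, idC in E, E'. rewrite E' in E. exact (eq_sym E).
Qed.

Lemma evals_app w1 w2 v1 v2 :
  evals Sigma w1 v1 -> evals Sigma w2 v2 -> evals Sigma (w1 ++ w2) (compose v1 v2).
Proof.
  intros H1 H2. induction H1 as [| i w v Hi _ IH | i w v t Hi _ IH Kt Ks]; simpl.
  - exact H2.
  - exact (evals_pos Sigma i (w ++ w2) (compose v v2) Hi IH).
  - exact (evals_neg Sigma i (w ++ w2) (compose v v2) t Hi IH Kt Ks).
Qed.

Lemma in_ball_compose n m a b :
  in_ball Sigma n a -> in_ball Sigma m b -> in_ball Sigma (n + m) (compose a b).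
Proof.
  intros [wa [La Ha]] [wb [Lb Hb]]. exists (wa ++ wb).
  rewrite length_app. split; [lia | now apply evals_app].
Qed.

Lemma in_ball_mono n m a : n <= m -> in_ball Sigma n a -> in_ball Sigma m a.
Proof. intros L [w [Lw Hw]]. exists w. split; [lia | assumption]. Qed.

Definition letters (m : nat) : list (nat * bool) :=
  flat_map (fun i => [(i, true); (i, false)]) (seq 0 m).

Fixpoint words (m n : nat) : list (list (nat * bool)) :=
  match n with
  | 0 => [[]]
  | S n => [] :: flat_map (fun l => map (cons l) (words m n)) (letters m)
  end.

Lemma length_flat_map_const {A B} (f : A -> list B) l k :
  (forall x, length (f x) = k) -> length (flat_map f l) = k * length l.
Proof. intros H. induction l; simpl; [lia |]. rewrite length_app, H, IHl. lia. Qed.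

Lemma length_words m n : length (words m n) <= (2 * m + 1) ^ n.
Proof.
  induction n as [| n IH]; [simpl; lia |]. cbn [words length].
  rewrite (length_flat_map_const _ _ (length (words m n))) by (intro; apply length_map).
  unfold letters. rewrite (length_flat_map_const _ _ 2), length_seq by reflexivity.
  rewrite Nat.pow_succ_r'.
  assert (0 < (2 * m + 1) ^ n) by (apply Nat.neq_0_lt_0, Nat.pow_nonzero; lia).
  nia.
Qed.

Lemma in_words w v n :
  evals Sigma w v -> length w <= n -> In w (words (length Sigma) n).
Proof.
  intros H. revert n.
  induction H as [| i w v Hi _ IH | i w v t Hi _ IH _ _]; intros [| n] Hn;
    simpl in Hn |- *; try lia; auto; right; apply in_flat_map.
  - exists (i, true). split; [| apply in_map, IH; lia].
    apply in_flat_map. exists i. split; [apply in_seq; lia | simpl; auto].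
  - exists (i, false). split; [| apply in_map, IH; lia].
    apply in_flat_map. exists i. split; [apply in_seq; lia | simpl; auto].
Qed.

Lemma ball_enumeration n : exists B,
  length B <= (2 * length Sigma + 1) ^ n /\ forall v, in_ball Sigma n v -> In v B.
Proof.
  exists (map (fun w => epsilon (inhabits idC) (evals Sigma w)) (words (length Sigma) n)).
  split; [rewrite length_map; apply length_words |].
  intros v [w [Lw Hw]]. apply in_map_iff. exists w. split.
  - apply (evals_functional w); [apply epsilon_spec; now exists v | assumption].
  - now apply (in_words w v).
Qed.

End Words.

(** * Orders and automorphisms *)

Definition power (f : Cantor -> Cantor) (k : nat) : Cantor -> Cantor := Nat.iter k f.

Definition has_order (f : Cantor -> Cantor) (d : nat) : Prop :=
  0 < d /\ power f d = idC /\ forall k, 0 < k < d -> power f k <> idC.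

Lemma power_add f a b x : power f (a + b) x = power f a (power f b x).
Proof. apply Nat.iter_add. Qed.

Lemma inV_power f k : inV f -> inV (power f k).
Proof.
  intros H. induction k as [| k IH]; [exact inV_id |].
  exact (inV_compose f (power f k) H IH).
Qed.

Lemma has_order_unique f d e : has_order f d -> has_order f e -> d = e.
Proof.
  intros [Hd [Fd Md]] [He [Fe Me]].
  destruct (Nat.lt_total d e) as [L | [L | L]]; [| assumption |]; exfalso.
  - now apply (Me d).
  - now apply (Md e).
Qed.

Lemma aut_id phi : is_autV phi -> phi idC = idC.
Proof.
  intros [Hin [_ [_ Hmul]]].
  apply functional_extensionality. intro x.
  apply (inV_injective (phi idC)); [exact (Hin idC inV_id) |].
  exact (eq_sym (equal_f (Hmul idC idC inV_id inV_id) x)).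
Qed.

Lemma aut_power phi f k : is_autV phi -> inV f -> phi (power f k) = power (phi f) k.
Proof.
  intros Hphi Hf. induction k as [| k IH]; [now apply aut_id |].
  change (phi (compose f (power f k)) = compose (phi f) (power (phi f) k)).
  destruct Hphi as [_ [_ [_ Hmul]]]. rewrite Hmul, IH; auto using inV_power.
Qed.

Lemma has_order_aut_equiv f g d : inV f -> aut_equiv f g -> has_order f d -> has_order g d.
Proof.
  intros Hf [phi [Hphi <-]] [Hd [Fd Md]].
  split; [assumption | split].
  - now rewrite <- aut_power, Fd, aut_id.
  - intros k Hk E. apply (Md k Hk).
    rewrite <- aut_power, <- (aut_id phi Hphi) in E by assumption.
    destruct Hphi as [_ [Hinj _]]. apply Hinj; auto using inV_power, inV_id.
Qed.

Lemma aut_equiv_refl f : aut_equiv f f.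
Proof.
  exists (fun g => g). split; [| reflexivity].
  split; [| split; [| split]]; auto.
  intros g Hg. now exists g.
Qed.

Lemma aut_equiv_sym f g : inV f -> aut_equiv f g -> aut_equiv g f.
Proof.
  intros Hf [phi [[Hin [Hinj [Hsurj Hmul]]] <-]].
  pose (psi := fun h => epsilon (inhabits idC) (fun a => inV a /\ phi a = h)).
  assert (Hpsi : forall h, inV h -> inV (psi h) /\ phi (psi h) = h)
    by (intros h Hh; apply epsilon_spec, Hsurj, Hh).
  exists psi. split; [split; [| split; [| split]] |].
  - intros h Hh. apply Hpsi, Hh.
  - intros h1 h2 H1 H2 E.
    now rewrite <- (proj2 (Hpsi h1 H1)), <- (proj2 (Hpsi h2 H2)), E.
  - intros a Ha. exists (phi a). split; [now apply Hin |].
    apply Hinj; [apply Hpsi; now apply Hin | assumption |].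
    apply Hpsi. now apply Hin.
  - intros h1 h2 H1 H2.
    destruct (Hpsi h1 H1) as [A1 B1], (Hpsi h2 H2) as [A2 B2].
    destruct (Hpsi _ (inV_compose h1 h2 H1 H2)) as [A3 B3].
    apply Hinj; [assumption | now apply inV_compose |].
    now rewrite B3, Hmul, B1, B2.
  - apply Hinj; [apply Hpsi; now apply Hin | assumption |]. apply Hpsi. now apply Hin.
Qed.

(** * Counting orbits *)

Lemma representatives {A} (R : A -> A -> Prop) (P : A -> Prop) (B : list A) :
  (forall a, R a a) -> exists L,
    (forall a, In a L -> P a) /\ ForallOrdPairs (fun a b => ~ R a b) L /\
    (forall v, P v -> In v B -> exists a, In a L /\ R v a).
Proof.
  intros Hrefl. induction B as [| x B [L [HP [Hpairs Hcover]]]].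
  - exists []. repeat split; [intros a [] | constructor | intros v _ []].
  - destruct (classic (P x /\ ~ exists a, In a L /\ R x a)) as [[Px Hnew] | Hold].
    + exists (x :: L). split; [| split].
      * intros a [<- | Ha]; auto.
      * constructor; [| assumption]. apply Forall_forall. intros a Ha Hxa. eauto.
      * intros v Pv [-> | Hv]; [exists v; simpl; auto |].
        destruct (Hcover v Pv Hv) as [a [Ha Hva]]. exists a. simpl. auto.
    + exists L. split; [| split]; [assumption .. |].
      intros v Pv [-> | Hv]; [| auto]. apply NNPP. intro Hno. auto.
Qed.

Lemma ForallOrdPairs_nth {A} (R : A -> A -> Prop) l d :
  ForallOrdPairs R l -> forall i j, i < j < length l -> R (nth i l d) (nth j l d).
Proof.
  induction 1 as [| a l Ha _ IH]; intros i j Hij; simpl in Hij; [lia |].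
  destruct i, j; try lia; simpl.
  - rewrite Forall_forall in Ha. apply Ha, nth_In. lia.
  - apply IH. lia.
Qed.

Section OrbitCount.

Variable Sigma : list (Cantor -> Cantor).
Hypothesis generators_inV : forall s, In s Sigma -> inV s.

Lemma in_ball_inV n v : in_ball Sigma n v -> inV v.
Proof. intros [w [_ Hw]]. exact (evals_inV Sigma w v generators_inV Hw). Qed.

Lemma orbit_count_exists n : exists k, orbit_count Sigma n k.
Proof.
  destruct (ball_enumeration Sigma n) as [B [_ HB]].
  destruct (representatives aut_equiv (in_ball Sigma n) B aut_equiv_refl)
    as [L [Hball [Hpairs Hcover]]].
  exists (length L), L. split; [reflexivity | split; [assumption | split]].
  - intros i j Hi Hj Hij. destruct (Nat.lt_gt_cases i j) as [[Lij | Lij] _]; [assumption | |].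
    + exact (ForallOrdPairs_nth _ L idC Hpairs i j (conj Lij Hj)).
    + intro E. apply aut_equiv_sym in E; [| apply (in_ball_inV n), Hball, nth_In, Hi].
      exact (ForallOrdPairs_nth _ L idC Hpairs j i (conj Lij Hi) E).
  - intros v Hv. apply Hcover; auto.
Qed.

Lemma aut_growth_spec n : orbit_count Sigma n (aut_growth Sigma n).
Proof. unfold aut_growth. apply epsilon_spec, orbit_count_exists. Qed.

Lemma orbit_count_le n k B :
  orbit_count Sigma n k -> (forall v, in_ball Sigma n v -> In v B) -> k <= length B.
Proof.
  intros [L [<- [Hball [Hdistinct _]]]] HB.
  apply NoDup_incl_length; [| intros a Ha; auto].
  apply (NoDup_nth L idC). intros i j Hi Hj E.
  destruct (Nat.eq_dec i j) as [| Hij]; [assumption |].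
  exfalso. apply (Hdistinct i j Hi Hj Hij). rewrite E. apply aut_equiv_refl.
Qed.

(* Orders are Aut(V)-invariant, so elements of distinct orders lie in distinct orbits. *)
Lemma orbit_count_ge_orders n k N :
  orbit_count Sigma n k ->
  (forall d, 1 <= d <= N -> exists g, in_ball Sigma n g /\ has_order g d) -> N <= k.
Proof.
  intros [L [<- [Hball [_ Hcover]]]] Horders.
  pose (order_of a := epsilon (inhabits 0) (has_order a)).
  rewrite <- (length_seq N 1), <- (length_map order_of L).
  apply NoDup_incl_length; [apply seq_NoDup |].
  intros d Hd. apply in_seq in Hd.
  destruct (Horders d) as [g [Hg Og]]; [lia |].
  destruct (Hcover g Hg) as [a [Ha Ea]].
  assert (Oa : has_order a d) by exact (has_order_aut_equiv g a d (in_ball_inV n g Hg) Ea Og).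
  apply in_map_iff. exists a. split; [| assumption].
  apply (has_order_unique a); [apply epsilon_spec; now exists d | assumption].
Qed.

End OrbitCount.

(** * Cone cycles *)

Lemma Forall2_nth {A B} (R : A -> B -> Prop) l l' :
  Forall2 R l l' -> forall n a b, n < length l -> R (nth n l a) (nth n l' b).
Proof.
  induction 1 as [| x y l l' Hxy _ IH]; intros [| n] a b Hn; simpl in Hn |- *;
    [lia | lia | assumption | apply IH; lia].
Qed.

Lemma Forall2_map_in {A B} (R : A -> A -> Prop) (R' : B -> B -> Prop) (f : A -> B) l l' :
  Forall2 R l l' -> (forall a b, In a l -> In b l' -> R a b -> R' (f a) (f b)) ->
  Forall2 R' (map f l) (map f l').
Proof.
  induction 1 as [| x y l l' Hxy _ IH]; intros H; simpl; constructor.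
  - apply H; simpl; auto.
  - apply IH. intros a b Ha Hb. apply H; simpl; auto.
Qed.

Lemma Forall2_diag {A} (R : A -> A -> Prop) l : (forall a, In a l -> R a a) -> Forall2 R l l.
Proof.
  induction l as [| a l IH]; intros H; constructor.
  - apply H. simpl. auto.
  - apply IH. intros b Hb. apply H. simpl. auto.
Qed.

Lemma Forall2_maps_rigidly_compose f g l m m' :
  Forall2 (maps_rigidly g) l m -> Forall2 (maps_rigidly f) m m' ->
  Forall2 (maps_rigidly (compose f g)) l m'.
Proof.
  intros Hg. revert m'. induction Hg as [| u v l m Huv _ IH]; intros m' Hf;
    inversion Hf; subst; constructor.
  - now apply (maps_rigidly_compose f g u v).
  - now apply IH.
Qed.

(* Pairing c :: cs with its rotation cs ++ [c] says that g maps c to the first cone of cs,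
   each cone of cs to the next one, and the last one back to c. *)
Record cone_cycle (g : Cantor -> Cantor) (c : list bool) (cs : list (list bool)) : Prop := {
  cycle_maps : Forall2 (maps_rigidly g) (c :: cs) (cs ++ [c]);
  cycle_head_disjoint : Forall (disjoint_cones c) cs;
  cycle_fixes : forall x, (forall d, In d (c :: cs) -> ~ in_cone d x) -> g x = x }.

Section ConeCycle.

Variables (g : Cantor -> Cantor) (c : list bool) (cs : list (list bool)).
Hypothesis Hcycle : cone_cycle g c cs.

Lemma cone_cycle_power k :
  k <= length cs -> maps_rigidly (power g (S k)) c (nth k (cs ++ [c]) []).
Proof.
  pose proof (Forall2_nth _ _ _ (cycle_maps _ _ _ Hcycle)) as Hstep.
  induction k as [| k IH]; intros Hk.
  - apply (Hstep 0 [] []). simpl. lia.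
  - specialize (Hstep (S k) [] []). simpl in Hstep. specialize (Hstep ltac:(lia)).
    specialize (IH ltac:(lia)). rewrite app_nth1 in IH by lia.
    exact (maps_rigidly_compose g (power g (S k)) _ _ _ IH Hstep).
Qed.

Lemma cone_cycle_reaches d : In d (c :: cs) -> exists j, maps_rigidly (power g j) c d.
Proof.
  intros [<- | Hd].
  - exists 0. intro y. reflexivity.
  - destruct (In_nth cs d [] Hd) as [k [Hk <-]]. exists (S k).
    rewrite <- (app_nth1 cs [c] [] Hk). apply cone_cycle_power. lia.
Qed.

Lemma cone_cycle_period : power g (S (length cs)) = idC.
Proof.
  apply functional_extensionality. intro x.
  destruct (classic (exists d, In d (c :: cs) /\ in_cone d x)) as [[d [Hd Hx]] | Hout].
  - destruct (cone_cycle_reaches d Hd) as [j Hj].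
    pose proof (cone_cycle_power (length cs) (le_n _)) as Hc.
    rewrite app_nth2, Nat.sub_diag in Hc by lia.
    (* x = g^j (c y), and g^(n+1) commutes with g^j and fixes c y. *)
    rewrite <- (cat_word_shift d x Hx), <- Hj, <- power_add, Nat.add_comm, power_add.
    now rewrite Hc.
  - assert (Hfix : g x = x).
    { apply (cycle_fixes _ _ _ Hcycle). intros d Hd Hx. eauto. }
    unfold idC. generalize (S (length cs)). intro k.
    induction k as [| k IH]; [reflexivity |]. simpl. now rewrite IH.
Qed.

Lemma cone_cycle_order : has_order g (S (length cs)).
Proof.
  split; [lia | split; [exact cone_cycle_period |]].
  intros [| k] Hk E; [lia |].
  pose proof (cone_cycle_power k ltac:(lia)) as Hk'.
  rewrite app_nth1, E in Hk' by lia.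
  pose (y := fun _ : nat => false).
  assert (Hdisj : disjoint_cones c (nth k cs [])).
  { apply (Forall_forall (disjoint_cones c) cs); [apply (cycle_head_disjoint _ _ _ Hcycle) |].
    apply nth_In. lia. }
  apply (Hdisj (cat_word c y)); [apply cat_word_in_cone |].
  unfold idC in Hk'. rewrite (Hk' y). apply cat_word_in_cone.
Qed.

End ConeCycle.

Lemma cone_cycle_conj g c cs z z' f :
  cone_cycle g c cs -> (forall x, z' (z x) = x) -> (forall x, z (z' x) = x) ->
  (forall d, In d (c :: cs) -> maps_rigidly z d (f d)) ->
  cone_cycle (compose z (compose g z')) (f c) (map f cs).
Proof.
  intros [Hmaps Hdisj Hfix] K K' Hz. constructor.
  - change (f c :: map f cs) with (map f (c :: cs)).
    replace (map f cs ++ [f c]) with (map f (cs ++ [c])) by apply map_app.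
    apply (Forall2_map_in _ _ _ _ _ Hmaps). intros a b Ha Hb Hab.
    assert (Hb' : In b (c :: cs)) by (apply in_app_or in Hb; simpl in *; tauto).
    apply (maps_rigidly_compose z _ _ b); [| now apply Hz].
    apply (maps_rigidly_compose g z' _ a); [| assumption].
    apply (maps_rigidly_inverse z); auto.
  - assert (Hz' : forall d, In d (c :: cs) -> maps_rigidly z' (f d) d)
      by (intros d Hd; apply (maps_rigidly_inverse z); auto).
    apply Forall_map, Forall_forall. intros d Hd x Hc Hd'.
    apply (proj1 (Forall_forall _ cs) Hdisj d Hd (z' x)).
    + apply (maps_rigidly_in_cone z' (f c)); [apply Hz'; simpl |]; auto.
    + apply (maps_rigidly_in_cone z' (f d)); [apply Hz'; simpl |]; auto.
  - intros x Hout. unfold compose. rewrite Hfix; [apply K' |].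
    intros d Hd Hx. apply (Hout (f d)); [exact (in_map f (c :: cs) d Hd) |].
    rewrite <- (K' x). exact (maps_rigidly_in_cone z d (f d) _ (Hz d Hd) Hx).
Qed.

Definition branch (b : bool) (l : list (list bool)) : list (list bool) :=
  map (fun d => d ++ [b]) l.

Lemma in_branches d' l :
  In d' (branch false l ++ branch true l) <-> exists d b, In d l /\ d' = d ++ [b].
Proof.
  unfold branch. rewrite in_app_iff, !in_map_iff. split.
  - intros [[d [<- Hd]] | [d [<- Hd]]]; eauto.
  - intros [d [[|] [Hd ->]]]; eauto.
Qed.

Lemma cone_cycle_double g t c cs :
  cone_cycle g c cs ->
  maps_rigidly t (c ++ [false]) (c ++ [true]) ->
  maps_rigidly t (c ++ [true]) (c ++ [false]) ->
  (forall x, ~ in_cone c x -> t x = x) ->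
  cone_cycle (compose t g) (c ++ [false]) (branch false cs ++ branch true (c :: cs)).
Proof.
  intros [Hmaps Hdisj Hfix] Ht01 Ht10 Htfix.
  assert (Htcs : forall b, Forall2 (maps_rigidly t) (branch b cs) (branch b cs)).
  { intro b. apply Forall2_diag. unfold branch. intros d' Hd'. apply in_map_iff in Hd'.
    destruct Hd' as [d [<- Hd]]. apply maps_rigidly_fixed. intros x Hx. apply Htfix.
    intro Hc. apply in_cone_app in Hx.
    exact (proj1 (Forall_forall _ cs) Hdisj d Hd x Hc (proj1 Hx)). }
  assert (Hhalf : forall b, Forall2 (maps_rigidly (compose t g))
                    (branch b (c :: cs)) (branch b cs ++ [c ++ [negb b]])).
  { intro b. apply (Forall2_maps_rigidly_compose t g _ (branch b cs ++ [c ++ [b]])).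
    - replace (branch b cs ++ [c ++ [b]]) with (branch b (cs ++ [c]))
        by (unfold branch; now rewrite map_app).
      apply (Forall2_map_in _ _ _ _ _ Hmaps). intros. now apply maps_rigidly_app.
    - apply Forall2_app; [apply Htcs |]. constructor; [| constructor].
      destruct b; assumption. }
  constructor.
  - pose proof (Forall2_app (Hhalf false) (Hhalf true)) as H.
    rewrite <- app_assoc in H |- *. exact H.
  - assert (Hbranch : forall b d, In d cs -> disjoint_cones (c ++ [false]) (d ++ [b]))
      by (intros b d Hd; apply disjoint_cones_app, (proj1 (Forall_forall _ cs) Hdisj d Hd)).
    apply Forall_app. split; [| constructor].
    + apply Forall_map, Forall_forall. auto.
    + apply disjoint_cones_branch.
    + apply Forall_map, Forall_forall. auto.
  - intros x Hout. unfold compose.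
    assert (Hout' : forall d, In d (c :: cs) -> ~ in_cone d x).
    { intros d Hd Hx. apply (Hout (d ++ [x (length d)])); [| now apply in_cone_snoc].
      change ((c ++ [false]) :: branch false cs ++ branch true (c :: cs))
        with (branch false (c :: cs) ++ branch true (c :: cs)).
      apply in_branches. eauto. }
    rewrite Hfix by assumption. apply Htfix, Hout'. simpl. auto.
Qed.

Lemma cone_cycle_extend g t c cs e :
  cone_cycle g c cs ->
  (forall d, In d (c :: cs) -> disjoint_cones d e) ->
  maps_rigidly t c e -> maps_rigidly t e c ->
  (forall x, ~ in_cone c x -> ~ in_cone e x -> t x = x) ->
  cone_cycle (compose t g) c (cs ++ [e]).
Proof.
  intros [Hmaps Hdisj Hfix] He Htce Htec Htfix.
  assert (Hge : maps_rigidly g e e).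
  { apply maps_rigidly_fixed. intros x Hx. apply Hfix. intros d Hd Hd'. exact (He d Hd x Hd' Hx). }
  constructor.
  - change (c :: cs ++ [e]) with ((c :: cs) ++ [e]). rewrite <- app_assoc.
    apply (Forall2_maps_rigidly_compose t g _ ((cs ++ [c]) ++ [e])).
    + apply Forall2_app; [assumption | now constructor].
    + rewrite <- !app_assoc. apply Forall2_app.
      * apply Forall2_diag. intros d Hd. apply maps_rigidly_fixed. intros x Hx.
        apply Htfix; intro Hx'.
        -- exact (proj1 (Forall_forall _ cs) Hdisj d Hd x Hx' Hx).
        -- exact (He d (or_intror Hd) x Hx Hx').
      * simpl. constructor; [assumption | now constructor].
  - apply Forall_app. split; [assumption |]. constructor; [| constructor].
    apply He. simpl. auto.
  - intros x Hout. unfold compose. rewrite Hfix.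
    + apply Htfix; apply Hout; simpl; rewrite in_app_iff; simpl; auto.
    + intros d [<- | Hd]; apply Hout; simpl; rewrite in_app_iff; auto.
Qed.

(** * The doubling and successor steps *)

Definition swap_000_001 (x : Cantor) : Cantor :=
  match x 0, x 1, x 2 with
  | false, false, false => cat_word [false; false; true] (shift 3 x)
  | false, false, true => cat_word [false; false; false] (shift 3 x)
  | _, _, _ => x
  end.

Definition swap_00_10 (x : Cantor) : Cantor :=
  match x 0, x 1 with
  | false, false => cat_word [true; false] (shift 2 x)
  | true, false => cat_word [false; false] (shift 2 x)
  | _, _ => x
  end.

(* The swaps act on the first cone 00 of an anchored cycle (see below); conjugating by
   conj_double or conj_succ then moves the new cycle back into anchored position. *)
Definition conj_double (x : Cantor) : Cantor :=
  match x 0, x 1, x 2 with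
  | true, _, _ => x
  | false, true, _ => cat_word [false; true; true] (shift 2 x)
  | false, false, true => cat_word [false; true; false] (shift 3 x)
  | false, false, false => cat_word [false; false] (shift 3 x)
  end.

Definition conj_double_inv (x : Cantor) : Cantor :=
  match x 0, x 1, x 2 with
  | true, _, _ => x
  | false, false, _ => cat_word [false; false; false] (shift 2 x)
  | false, true, false => cat_word [false; false; true] (shift 3 x)
  | false, true, true => cat_word [false; true] (shift 3 x)
  end.

Definition conj_succ (x : Cantor) : Cantor :=
  match x 0, x 1 with
  | false, false => x
  | false, true => cat_word [false; true; false] (shift 2 x)
  | true, false => cat_word [false; true; true] (shift 2 x)
  | true, true => cat_word [true] (shift 2 x)
  end.

Definition conj_succ_inv (x : Cantor) : Cantor :=
  match x 0, x 1, x 2 with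
  | false, false, _ => x
  | false, true, false => cat_word [false; true] (shift 3 x)
  | false, true, true => cat_word [true; false] (shift 3 x)
  | true, _, _ => cat_word [true; true] (shift 1 x)
  end.

Ltac cantor_compute :=
  cbn; repeat rewrite shift_cat_word_le, <- cat_word_app by (simpl; lia); cbn.

Ltac destruct_depth3 u :=
  destruct u as [| b0 [| b1 [| b2 [|]]]]; try discriminate; destruct b0, b1, b2.

Ltac rigid_by_computation :=
  intros u Hu; destruct_depth3 u; eexists; intro y; cantor_compute; reflexivity.

Ltac inverse_by_computation :=
  apply (inverse_of_depth _ _ 3); intros u y Hu; destruct_depth3 u; cantor_compute; reflexivity.

Lemma swap_000_001_depth3 : forall u, length u = 3 -> exists v, maps_rigidly swap_000_001 u v.
Proof. rigid_by_computation. Qed.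

Lemma swap_00_10_depth3 : forall u, length u = 3 -> exists v, maps_rigidly swap_00_10 u v.
Proof. rigid_by_computation. Qed.

Lemma conj_double_depth3 : forall u, length u = 3 -> exists v, maps_rigidly conj_double u v.
Proof. rigid_by_computation. Qed.

Lemma conj_succ_depth3 : forall u, length u = 3 -> exists v, maps_rigidly conj_succ u v.
Proof. rigid_by_computation. Qed.

Lemma swap_000_001_involutive x : swap_000_001 (swap_000_001 x) = x.
Proof. revert x. inverse_by_computation. Qed.

Lemma swap_00_10_involutive x : swap_00_10 (swap_00_10 x) = x.
Proof. revert x. inverse_by_computation. Qed.

Lemma conj_double_inv_l x : conj_double_inv (conj_double x) = x.
Proof. revert x. inverse_by_computation. Qed.

Lemma conj_double_inv_r x : conj_double (conj_double_inv x) = x.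
Proof. revert x. inverse_by_computation. Qed.

Lemma conj_succ_inv_l x : conj_succ_inv (conj_succ x) = x.
Proof. revert x. inverse_by_computation. Qed.

Lemma conj_succ_inv_r x : conj_succ (conj_succ_inv x) = x.
Proof. revert x. inverse_by_computation. Qed.

Lemma swap_000_001_rigid :
  maps_rigidly swap_000_001 [false; false; false] [false; false; true] /\
  maps_rigidly swap_000_001 [false; false; true] [false; false; false].
Proof. split; intro y; cantor_compute; reflexivity. Qed.

Lemma swap_00_10_rigid :
  maps_rigidly swap_00_10 [false; false] [true; false] /\
  maps_rigidly swap_00_10 [true; false] [false; false].
Proof. split; intro y; cantor_compute; reflexivity. Qed.

Lemma conj_double_rigid :
  maps_rigidly conj_double [false; true] [false; true; true] /\
  maps_rigidly conj_double [false; false; true] [false; true; false] /\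
  maps_rigidly conj_double [false; false; false] [false; false].
Proof. repeat split; intro y; cantor_compute; reflexivity. Qed.

Lemma conj_succ_rigid :
  maps_rigidly conj_succ [false; false] [false; false] /\
  maps_rigidly conj_succ [false; true] [false; true; false] /\
  maps_rigidly conj_succ [true; false] [false; true; true].
Proof. repeat split; intro y; cantor_compute; reflexivity. Qed.

Lemma swap_000_001_fixed x : ~ in_cone [false; false] x -> swap_000_001 x = x.
Proof.
  intros Hx. unfold swap_000_001.
  destruct (x 0) eqn:E0, (x 1) eqn:E1; try reflexivity.
  exfalso. now apply Hx, in_cone_two.
Qed.

Lemma swap_00_10_fixed x :
  ~ in_cone [false; false] x -> ~ in_cone [true; false] x -> swap_00_10 x = x.
Proof.
  intros H00 H10. unfold swap_00_10.
  destruct (x 0) eqn:E0, (x 1) eqn:E1; try reflexivity; exfalso;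
    [apply H10 | apply H00]; now apply in_cone_two.
Qed.

Lemma inV_swap_000_001 : inV swap_000_001.
Proof.
  apply (inV_intro _ swap_000_001); try exact swap_000_001_involutive.
  exact (locally_rigid_of_depth _ 3 swap_000_001_depth3).
Qed.

Lemma inV_swap_00_10 : inV swap_00_10.
Proof.
  apply (inV_intro _ swap_00_10); try exact swap_00_10_involutive.
  exact (locally_rigid_of_depth _ 3 swap_00_10_depth3).
Qed.

Lemma inV_conj_double : inV conj_double.
Proof.
  apply (inV_intro _ conj_double_inv conj_double_inv_l conj_double_inv_r).
  exact (locally_rigid_of_depth _ 3 conj_double_depth3).
Qed.

Lemma inV_conj_double_inv : inV conj_double_inv.
Proof. exact (inV_inverse _ _ inV_conj_double conj_double_inv_l conj_double_inv_r). Qed.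

Lemma inV_conj_succ : inV conj_succ.
Proof.
  apply (inV_intro _ conj_succ_inv conj_succ_inv_l conj_succ_inv_r).
  exact (locally_rigid_of_depth _ 3 conj_succ_depth3).
Qed.

Lemma inV_conj_succ_inv : inV conj_succ_inv.
Proof. exact (inV_inverse _ _ inV_conj_succ conj_succ_inv_l conj_succ_inv_r). Qed.

Definition zero_subcone (d : list bool) : Prop := exists b r, d = false :: b :: r.

(* Keeping all cones inside 0 leaves the cone 10 free for the successor step. *)
Definition anchored_cycle (g : Cantor -> Cantor) (cs : list (list bool)) : Prop :=
  cone_cycle g [false; false] cs /\ Forall zero_subcone cs.

Lemma anchored_cycle_id : anchored_cycle idC [].
Proof.
  split; [constructor | constructor].
  - constructor; [intro y; reflexivity | constructor].
  - constructor.
  - reflexivity.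
Qed.

Lemma anchored_cycle_zero_subcone g cs d :
  anchored_cycle g cs -> In d ([false; false] :: cs) -> zero_subcone d.
Proof.
  intros [_ Hz] [<- | Hd]; [now exists false, [] |].
  exact (proj1 (Forall_forall _ cs) Hz d Hd).
Qed.

Definition conj_double_cone (d : list bool) : list bool :=
  match d with
  | false :: false :: false :: r => false :: false :: r
  | false :: false :: true :: r => false :: true :: false :: r
  | false :: true :: r => false :: true :: true :: r
  | _ => d
  end.

Definition conj_succ_cone (d : list bool) : list bool :=
  match d with
  | false :: true :: r => false :: true :: false :: r
  | true :: false :: r => false :: true :: true :: r
  | _ => d
  end.

Lemma conj_double_cone_spec d b : zero_subcone d ->
  maps_rigidly conj_double (d ++ [b]) (conj_double_cone (d ++ [b])) /\
  zero_subcone (conj_double_cone (d ++ [b])).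
Proof.
  intros [b0 [r ->]]. destruct conj_double_rigid as [H01 [H001 H000]].
  destruct b0; simpl.
  - split; [exact (maps_rigidly_app _ _ _ (r ++ [b]) H01) | do 2 eexists; reflexivity].
  - destruct (r ++ [b]) as [| [|] r'] eqn:E; [now destruct r |
      split; [exact (maps_rigidly_app _ _ _ r' H001) | do 2 eexists; reflexivity] |
      split; [exact (maps_rigidly_app _ _ _ r' H000) | do 2 eexists; reflexivity]].
Qed.

Lemma conj_succ_cone_spec d : zero_subcone d \/ d = [true; false] ->
  maps_rigidly conj_succ d (conj_succ_cone d) /\ zero_subcone (conj_succ_cone d).
Proof.
  destruct conj_succ_rigid as [H00 [H01 H10]].
  intros [[[|] [r ->]] | ->]; simpl.
  - split; [exact (maps_rigidly_app _ _ _ r H01) | do 2 eexists; reflexivity].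
  - split; [exact (maps_rigidly_app _ _ _ r H00) | do 2 eexists; reflexivity].
  - split; [exact H10 | do 2 eexists; reflexivity].
Qed.

Definition double_step (g : Cantor -> Cantor) : Cantor -> Cantor :=
  compose conj_double (compose (compose swap_000_001 g) conj_double_inv).

Definition succ_step (g : Cantor -> Cantor) : Cantor -> Cantor :=
  compose conj_succ (compose (compose swap_00_10 g) conj_succ_inv).

Lemma anchored_cycle_double g cs : anchored_cycle g cs ->
  exists cs', anchored_cycle (double_step g) cs' /\ S (length cs') = 2 * S (length cs).
Proof.
  intros Ha. destruct swap_000_001_rigid as [H0 H1].
  pose proof (cone_cycle_double _ _ _ _ (proj1 Ha) H0 H1 swap_000_001_fixed) as Hd.
  set (l := branch false cs ++ branch true ([false; false] :: cs)) in Hd.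
  assert (Hl : forall d', In d' ([false; false; false] :: l) ->
                 exists d b, zero_subcone d /\ d' = d ++ [b]).
  { intros d' Hd'. change ([false; false; false] :: l)
      with (branch false ([false; false] :: cs) ++ branch true ([false; false] :: cs)) in Hd'.
    apply in_branches in Hd'. destruct Hd' as [d [b [Hin ->]]].
    exists d, b. split; [now apply (anchored_cycle_zero_subcone g cs) | reflexivity]. }
  exists (map conj_double_cone l). split; [split |].
  - apply (cone_cycle_conj _ _ _ _ _ conj_double_cone Hd conj_double_inv_l conj_double_inv_r).
    intros d' Hd'. destruct (Hl d' Hd') as [d [b [Hz ->]]].
    exact (proj1 (conj_double_cone_spec d b Hz)).
  - apply Forall_map, Forall_forall. intros d' Hd'.
    destruct (Hl d' (or_intror Hd')) as [d [b [Hz ->]]].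
    exact (proj2 (conj_double_cone_spec d b Hz)).
  - unfold l, branch. rewrite length_map, length_app, !length_map. simpl. lia.
Qed.

Lemma anchored_cycle_succ g cs : anchored_cycle g cs ->
  exists cs', anchored_cycle (succ_step g) cs' /\ S (length cs') = S (S (length cs)).
Proof.
  intros Ha. destruct swap_00_10_rigid as [H0 H1].
  assert (Hfree : forall d, In d ([false; false] :: cs) -> disjoint_cones d [true; false]).
  { intros d Hd. destruct (anchored_cycle_zero_subcone g cs d Ha Hd) as [b [r ->]].
    apply disjoint_cones_head. }
  pose proof (cone_cycle_extend _ _ _ _ _ (proj1 Ha) Hfree H0 H1 swap_00_10_fixed) as He.
  assert (Hl : forall d, In d ([false; false] :: cs ++ [[true; false]]) ->
                 zero_subcone d \/ d = [true; false]).
  { intros d Hd. change ([false; false] :: cs ++ [[true; false]])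
      with (([false; false] :: cs) ++ [[true; false]]) in Hd.
    apply in_app_or in Hd. destruct Hd as [Hd | [<- | []]]; [| now right].
    left. now apply (anchored_cycle_zero_subcone g cs). }
  exists (map conj_succ_cone (cs ++ [[true; false]])). split; [split |].
  - apply (cone_cycle_conj _ _ _ _ _ conj_succ_cone He conj_succ_inv_l conj_succ_inv_r).
    intros d Hd. exact (proj1 (conj_succ_cone_spec d (Hl d Hd))).
  - apply Forall_map, Forall_forall. intros d Hd.
    exact (proj2 (conj_succ_cone_spec d (Hl d (or_intror Hd)))).
  - rewrite length_map, length_app. simpl. lia.
Qed.

(** * Exponential growth *)

Section Growth.

Variable Sigma : list (Cantor -> Cantor).
Hypothesis HSigma : generatesV Sigma.

Lemma inV_in_ball v : inV v -> exists r, in_ball Sigma r v.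
Proof.
  intros Hv. destruct (proj2 HSigma v Hv) as [w Hw]. exists (length w), w. auto.
Qed.

Lemma short_anchored_cycles : exists K, forall n d, 1 <= d <= 2 ^ n ->
  exists g cs, in_ball Sigma (K * n) g /\ anchored_cycle g cs /\ S (length cs) = d.
Proof.
  destruct (inV_in_ball _ inV_conj_double) as [rD HD].
  destruct (inV_in_ball _ inV_conj_double_inv) as [rD' HD'].
  destruct (inV_in_ball _ inV_swap_000_001) as [rT HT].
  destruct (inV_in_ball _ inV_conj_succ) as [rS HS].
  destruct (inV_in_ball _ inV_conj_succ_inv) as [rS' HS'].
  destruct (inV_in_ball _ inV_swap_00_10) as [rU HU].
  set (K := rD + rD' + rT + rS + rS' + rU).
  assert (Hdouble : forall r g, in_ball Sigma r g -> in_ball Sigma (r + K) (double_step g)).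
  { intros r g Hg. apply (in_ball_mono _ (rD + ((rT + r) + rD'))); [unfold K; lia |].
    unfold double_step. auto using in_ball_compose. }
  assert (Hsucc : forall r g, in_ball Sigma r g -> in_ball Sigma (r + K) (succ_step g)).
  { intros r g Hg. apply (in_ball_mono _ (rS + ((rU + r) + rS'))); [unfold K; lia |].
    unfold succ_step. auto using in_ball_compose. }
  exists (2 * K). induction n as [| n IH]; intros d Hd.
  - exists idC, []. split; [| split; [exact anchored_cycle_id | simpl in *; lia]].
    exists []. split; [simpl; lia | constructor].
  - destruct (Nat.le_gt_cases d (2 ^ n)) as [Hsmall | Hbig].
    + destruct (IH d) as [g [cs [Hg [Ha Hl]]]]; [lia |].
      exists g, cs. split; [apply (in_ball_mono _ (2 * K * n)); [nia | assumption] | auto].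
    + rewrite Nat.pow_succ_r' in Hd.
      destruct (Nat.Even_or_Odd d) as [[e ->] | [e ->]];
        destruct (IH e) as [g [cs [Hg [Ha <-]]]]; try lia;
        destruct (anchored_cycle_double g cs Ha) as [cs' [Ha' Hl']].
      * exists (double_step g), cs'. split; [| auto].
        apply (in_ball_mono _ (2 * K * n + K)); [nia | auto].
      * destruct (anchored_cycle_succ _ _ Ha') as [cs'' [Ha'' Hl'']].
        exists (succ_step (double_step g)), cs''. split; [| split; [assumption | lia]].
        apply (in_ball_mono _ (2 * K * n + K + K)); [nia | auto].
Qed.

Lemma aut_growth_upper n : aut_growth Sigma n <= (2 * length Sigma + 1) ^ n.
Proof.
  destruct (ball_enumeration Sigma n) as [B [HB Hball]].
  eapply Nat.le_trans; [| exact HB].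
  exact (orbit_count_le Sigma n _ B (aut_growth_spec Sigma (proj1 HSigma) n) Hball).
Qed.

Lemma aut_growth_lower : exists K, forall n r, K * n <= r -> 2 ^ n <= aut_growth Sigma r.
Proof.
  destruct short_anchored_cycles as [K HK]. exists K. intros n r Hr.
  apply (orbit_count_ge_orders Sigma (proj1 HSigma) r);
    [apply aut_growth_spec, HSigma |].
  intros d Hd. destruct (HK n d Hd) as [g [cs [Hg [Ha <-]]]].
  exists g. split; [exact (in_ball_mono _ _ _ _ Hr Hg) | exact (cone_cycle_order _ _ _ (proj1 Ha))].
Qed.

End Growth.

Lemma pow_le_pow2 m n : m ^ n <= 2 ^ (m * n).
Proof.
  rewrite Nat.pow_mul_r. apply Nat.pow_le_mono_l, Nat.lt_le_incl, Nat.pow_gt_lin_r. lia.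
Qed.

Theorem mainTheorem7 : forall Sigma : list (Cantor -> Cantor),
  generatesV Sigma -> exponential (aut_growth Sigma).
Proof.
  intros Sigma HSigma. split.
  - set (lam := 2 * length Sigma + 1). exists lam. split; [lia |]. intro n.
    assert (aut_growth Sigma n <= 2 ^ (lam * n + lam)).
    { rewrite (aut_growth_upper Sigma HSigma n), pow_le_pow2.
      apply Nat.pow_le_mono_r; lia. }
    pose proof (Nat.le_mul_l (2 ^ (lam * n + lam)) lam ltac:(lia)). lia.
  - destruct (aut_growth_lower Sigma HSigma) as [K HK]. exists (K + 1). split; [lia |].
    intro n. pose proof (HK n ((K + 1) * n + (K + 1)) ltac:(nia)). nia.
Qed.
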